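(* Let $G$ be a finite, simple, connected graph without isolated vertices. Then Dom has a winning strategy in the Sepy-start Disjoint Domination Game played on $G$.
   Context: For a vertex $v$ of a graph $G$, $N[v]$ denotes its closed neighborhood ($v$ together with its neighbors). The Disjoint Domination Game on an isolate-free graph $G$ is played by two players, Dom and Sepy, with the color set $\{p,b\}$ (purple and blue). At any stage, $V_p$ and $V_b$ denote the sets of vertices colored $p$ and $b$, respectively, and for a color $c$ we write $\bar c$ for the other color. The players alternately make moves; either player may use either color. A move consists of choosing a vertex $v$ and a color $c\in\{p,b\}$ such that (i) $v$ is not yet colored, and (ii) there is a vertex $u\in N[v]$ with $N[u]\cap V_c=\emptyset$ (evaluated before the move); then $v$ receives color $c$. A player must make a legal move on his turn (no passing). The game terminates as soon as one of the following holds: (s* ) some vertex $v$ has a monochromatic closed neighborhood, i.e. $N[v]\subseteq V_p$ or $N[v]\subseteq V_b$ — then Sepy wins; (d* ) both $V_p$ and $V_b$ are dominating sets of $G$ — then Dom wins. In the Sepy-start game, Sepy makes the first move. *)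

From mathcomp Require Import all_boot.
Set Implicit Arguments. Unset Strict Implicit. Unset Printing Implicit Defensive.

Definition simple_graph (T : finType) (e : rel T) : Prop :=
  symmetric e /\ irreflexive e.

Definition cnbhd (T : finType) (e : rel T) (v : T) : {set T} :=
  [set u | (u == v) || e v u].

Definition connected_graph (T : finType) (e : rel T) : Prop :=
  forall x y : T, connect e x y.

Definition isolate_free (T : finType) (e : rel T) : Prop :=
  forall v : T, exists u : T, e v u.

(* Colours: true = purple (p), false = blue (b).
   A position: each vertex is uncoloured (None) or coloured (Some c). *)
Definition coloring (T : finType) := {ffun T -> option bool}.

Definition init_coloring (T : finType) : coloring T := [ffun _ => None].

Definition sepy_cond (T : finType) (e : rel T) (f : coloring T) : Prop :=
  exists v : T, exists c : bool, forall u, u \in cnbhd e v -> f u = Some c.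

Definition dominating_color (T : finType) (e : rel T) (f : coloring T)
  (c : bool) : Prop :=
  forall v : T, exists2 u, u \in cnbhd e v & f u = Some c.

Definition dom_cond (T : finType) (e : rel T) (f : coloring T) : Prop :=
  dominating_color e f true /\ dominating_color e f false.

Definition legal_move (T : finType) (e : rel T) (f : coloring T)
  (v : T) (c : bool) : Prop :=
  f v = None /\
  exists2 u, u \in cnbhd e v & forall w, w \in cnbhd e u -> f w <> Some c.

Definition play (T : finType) (f : coloring T) (v : T) (c : bool)
  : coloring T := [ffun x => if x == v then Some c else f x].

(* dom_wins e f t : from position f with Dom to move iff t = true,
   Dom has a winning strategy.  The game stops as soon as [s*] or [d*]
   holds; [s*] means Sepy wins.  A player must move (no passing); a
   non-terminal position with no legal move is (conservatively) not
   counted as a Dom win (such positions cannot actually occur). *)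
Inductive dom_wins (T : finType) (e : rel T) : coloring T -> bool -> Prop :=
| dom_wins_end f t :
    ~ sepy_cond e f -> dom_cond e f -> dom_wins e f t
| dom_wins_dom_turn f :
    ~ sepy_cond e f -> ~ dom_cond e f ->
    (exists v c, legal_move e f v c /\ dom_wins e (play f v c) false) ->
    dom_wins e f true
| dom_wins_sepy_turn f :
    ~ sepy_cond e f -> ~ dom_cond e f ->
    (exists v c, legal_move e f v c) ->
    (forall v c, legal_move e f v c -> dom_wins e (play f v c) true) ->
    dom_wins e f false.

From mathcomp Require Import all_boot.
Set Implicit Arguments. Unset Strict Implicit.

(* Dom keeps the position balanced: every coloured vertex sees both colours
   in its closed neighbourhood, so no [N[v]] can become monochromatic at a
   coloured vertex.  After Sepy colours [w] with [c], either [w] already sees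
   [~~ c] and Dom makes a move that keeps the balance (one exists by
   connectivity: walk from a vertex missing a colour to a coloured vertex), or
   legality of Sepy's move leaves an uncoloured [y] in [N[w]], and Dom colours
   it [~~ c], balancing [w] and [y] at once.  The number of uncoloured vertices
   decreases, so the game ends with [d*]. *)

Section DisjointDomination.

Variables (T : finType) (e : rel T).
Implicit Types (f g : coloring T) (u v w x y : T) (c d : bool).

Definition sees f x c : bool := [exists u in cnbhd e x, f u == Some c].

Definition sees_both f x : bool := sees f x true && sees f x false.

Definition balanced f : Prop := forall x c, f x = Some c -> sees_both f x.

Definition uncolored f : {set T} := [set x | f x == None].

Lemma in_cnbhd u v : (u \in cnbhd e v) = (u == v) || e v u.
Proof. by rewrite inE. Qed.

Lemma cnbhd_refl v : v \in cnbhd e v.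
Proof. by rewrite in_cnbhd eqxx. Qed.

Lemma seesP f x c :
  reflect (exists2 u, u \in cnbhd e x & f u = Some c) (sees f x c).
Proof.
by apply: (iffP exists_inP) => -[u Hu /eqP fu]; exists u => //; apply/eqP.
Qed.

Lemma sees_self f x c : f x = Some c -> sees f x c.
Proof. by move=> fx; apply/seesP; exists x; rewrite ?cnbhd_refl. Qed.

Lemma sees_both_compl f x c : sees f x c -> sees f x (~~ c) -> sees_both f x.
Proof. by rewrite /sees_both; case: c => -> ->. Qed.

Lemma not_sees f x c u : ~~ sees f x c -> u \in cnbhd e x -> f u <> Some c.
Proof. by move=> /seesP nx Hu fu; apply: nx; exists u. Qed.

Lemma unseen_uncolored f x c u :
  ~~ sees f x c -> ~~ sees f x (~~ c) -> u \in cnbhd e x -> f u = None.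
Proof.
move=> nc nc' Hu; case fu: (f u) => [d|] //.
have [dc|dc] := eqVneq d c; first by case: (not_sees nc Hu); rewrite fu dc.
by case: (not_sees nc' Hu); rewrite fu; case: c d dc {nc nc' fu} => -[].
Qed.

Lemma playE f v c x : play f v c x = if x == v then Some c else f x.
Proof. by rewrite ffunE. Qed.

Lemma play_self f v c : play f v c v = Some c.
Proof. by rewrite playE eqxx. Qed.

Lemma play_other f v c x : x != v -> play f v c x = f x.
Proof. by rewrite playE => /negbTE ->. Qed.

Lemma sees_play f v c x d : f v = None -> sees f x d -> sees (play f v c) x d.
Proof.
move=> fv /seesP[u Hu fu]; apply/seesP; exists u => //.
by rewrite play_other //; apply: contra_eqN fu => /eqP ->; rewrite fv.
Qed.

Lemma sees_both_play f v c x :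
  f v = None -> sees_both f x -> sees_both (play f v c) x.
Proof. by move=> fv /andP[st sf]; rewrite /sees_both !sees_play. Qed.

Lemma balanced_play f y d :
  balanced f -> f y = None -> sees (play f y d) y (~~ d) ->
  balanced (play f y d).
Proof.
move=> bal fy sy x c'; have [->|xy] := eqVneq x y.
  by move=> _; apply: (@sees_both_compl _ _ d) => //; apply/sees_self/play_self.
by rewrite play_other // => /bal; apply: sees_both_play.
Qed.

Lemma sees_both_not_monochromatic f v c' :
  sees_both f v -> ~ (forall u, u \in cnbhd e v -> f u = Some c').
Proof.
case/andP=> /seesP[u1 Hu1 f1] /seesP[u2 Hu2 f2] mono.
by move: (mono _ Hu1) (mono _ Hu2); rewrite f1 f2 => -[<-] [].
Qed.

Lemma balanced_no_sepy f : balanced f -> ~ sepy_cond e f.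
Proof.
move=> bal [v [c' mono]].
exact: sees_both_not_monochromatic (bal _ _ (mono _ (cnbhd_refl v))) mono.
Qed.

Lemma dom_condP f : reflect (dom_cond e f) [forall v, sees_both f v].
Proof.
apply: (iffP forallP) => [all_v | [dt df] v].
  by split=> v; case/andP: (all_v v) => /seesP ? /seesP.
by apply/andP; split; apply/seesP; [apply: dt | apply: df].
Qed.

Lemma not_dom_cond f : ~ dom_cond e f -> exists v c, ~~ sees f v c.
Proof.
move/dom_condP; rewrite negb_forall => /existsP[v].
by rewrite negb_and => /orP[] nv; [exists v, true | exists v, false].
Qed.

Lemma legal_move_unseen f y u c :
  f y = None -> u \in cnbhd e y -> ~~ sees f u c -> legal_move e f y c.
Proof. by move=> fy Hu nu; split=> //; exists u => // x; apply: not_sees. Qed.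

Lemma card_uncolored_play f v c :
  f v = None -> #|uncolored (play f v c)| < #|uncolored f|.
Proof.
rewrite /uncolored => fv; apply/proper_card/properP; split.
  by apply/subsetP => x; rewrite !inE playE; case: ifP => // /eqP ->; rewrite fv.
by exists v; rewrite !inE ?play_self ?fv.
Qed.

Lemma connect_cross (p : pred T) x y :
  connect e x y -> ~~ p x -> p y -> exists a b, [/\ e a b, ~~ p a & p b].
Proof.
case/connectP=> s; elim: s x => [|z s IH] x /= es ey px py.
  by rewrite -ey py in px.
case/andP: es => exz es; have [pz|npz] := boolP (p z); first by exists x, z.
exact: IH es ey npz py.
Qed.

Hypothesis e_sym : symmetric e.

Lemma cnbhd_sym u v : (u \in cnbhd e v) = (v \in cnbhd e u).
Proof. by rewrite !in_cnbhd eq_sym e_sym. Qed.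

Lemma exists_legal_move f :
  ~ sepy_cond e f -> ~ dom_cond e f -> exists v c, legal_move e f v c.
Proof.
move=> nosepy /not_dom_cond[v [c nv]].
have [/exists_inP[w Hw /eqP fw]|] := boolP [exists w in cnbhd e v, f w == None].
  by exists w, c; apply: legal_move_unseen fw _ nv; rewrite cnbhd_sym.
rewrite negb_exists_in => /forall_inP colored; case: nosepy.
exists v, (~~ c) => u Hu; have := not_sees nv Hu; have := colored u Hu.
by case: (f u) => [[]|] //; case: c {nv}.
Qed.

Hypothesis e_connected : connected_graph e.

Lemma balancing_move f z c :
  balanced f -> f z = Some c -> ~ dom_cond e f ->
  exists y d, legal_move e f y d /\ sees f y (~~ d).
Proof.
move=> bal fz /not_dom_cond[v [c' nv]].
have sz : sees f z c' by case/andP: (bal _ _ fz); case: (c').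
have [b [a [eba nb sa]]] := connect_cross (p := sees f ^~ c') (e_connected v z) nv sz.
have fb : f b = None.
  case fb: (f b) => [d|] //; move: (bal _ _ fb); rewrite /sees_both.
  by case: (c') nb => /negbTE ->; rewrite ?andbF.
have [sb|nb'] := boolP (sees f b (~~ c')).
  by exists b, c'; split=> //; apply: legal_move_unseen fb (cnbhd_refl b) nb.
have fa : f a = None by apply: unseen_uncolored nb nb' _; rewrite in_cnbhd eba orbT.
exists a, (~~ c'); rewrite negbK; split=> //.
by apply: legal_move_unseen fa _ nb'; rewrite in_cnbhd e_sym eba orbT.
Qed.

Hypotheses (e_irr : irreflexive e) (e_isolate_free : isolate_free e).

Lemma sepy_move_leaves_gap f w c :
  legal_move e f w c -> exists2 y, y \in cnbhd e w & play f w c y <> Some c.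
Proof.
case=> fw [u Hu noc]; have [uw|uw] := eqVneq u w.
  have [z ewz] := e_isolate_free w.
  have zw : z != w by apply: contraTneq ewz => ->; rewrite e_irr.
  have Hz : z \in cnbhd e w by rewrite in_cnbhd ewz orbT.
  by exists z; rewrite // play_other //; apply: noc; rewrite uw.
by exists u; rewrite // play_other //; apply: noc; rewrite cnbhd_refl.
Qed.

Lemma sepy_move_no_sepy f w c :
  balanced f -> legal_move e f w c -> ~ sepy_cond e (play f w c).
Proof.
move=> bal mv [v [c' mono]]; have [vw|vw] := eqVneq v w.
  have [y Hy gy] := sepy_move_leaves_gap mv; rewrite vw in mono.
  move: (mono _ Hy) (mono _ (cnbhd_refl w)); rewrite play_self => gyc [ec].
  by apply: gy; rewrite gyc ec.
have gv := mono _ (cnbhd_refl v); rewrite play_other // in gv.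
exact: sees_both_not_monochromatic (sees_both_play _ mv.1 (bal _ _ gv)) mono.
Qed.

Lemma dom_reply f w c : balanced f -> legal_move e f w c ->
  ~ dom_cond e (play f w c) ->
  exists y d, legal_move e (play f w c) y d /\ balanced (play (play f w c) y d).
Proof.
move=> bal mv nodom; set g := play f w c; have [fw _] := mv.
have [sw|nw] := boolP (sees g w (~~ c)).
  have balg : balanced g := balanced_play bal fw sw.
  have [y [d [mv' sy]]] := balancing_move balg (play_self f w c) nodom.
  by exists y, d; split; last exact: balanced_play balg mv'.1 (sees_play d mv'.1 sy).
have [y Hy gyc] := sepy_move_leaves_gap mv.
have Hw : w \in cnbhd e y by rewrite cnbhd_sym.
have yw : y != w by apply/eqP => yw; apply: gyc; rewrite yw play_self.
have gy : g y = None.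
  move: (not_sees nw Hy) gyc; rewrite -/g; case: (g y) => [[]|] //; by case: (c).
exists y, (~~ c); split; first exact: legal_move_unseen gy Hw nw.
have hw : play g y (~~ c) w = Some c by rewrite play_other 1?eq_sym // play_self.
move=> x c'; have [->|xy] := eqVneq x y => [_|].
  apply: (@sees_both_compl _ _ (~~ c)); first exact/sees_self/play_self.
  by rewrite negbK; apply/seesP; exists w.
have [->|xw] := eqVneq x w => [_|].
  apply: (@sees_both_compl _ _ c); first exact: sees_self hw.
  by apply/seesP; exists y; rewrite // play_self.
rewrite !play_other // => /bal /(sees_both_play c fw).
exact: sees_both_play.
Qed.

Lemma balanced_dom_wins f : balanced f -> dom_wins e f false.
Proof.
have [n] := ubnP #|uncolored f|; elim: n f => // n IH f ltf bal.
have nosepy := balanced_no_sepy bal.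
have [dom|nodom] := dom_condP f; first exact: dom_wins_end.
apply: dom_wins_sepy_turn => //; first exact: exists_legal_move.
move=> w c mv; set g := play f w c.
have nosepy_g := sepy_move_no_sepy bal mv.
have [domg|nodomg] := dom_condP g; first exact: dom_wins_end.
apply: dom_wins_dom_turn => //.
have [y [d [mv' balh]]] := dom_reply bal mv nodomg.
exists y, d; split=> //; apply: IH balh.
rewrite ltnS in ltf; have ltg := card_uncolored_play c mv.1.
exact: leq_trans (card_uncolored_play d mv'.1) (leq_trans (ltnW ltg) ltf).
Qed.

End DisjointDomination.

Theorem theorem3 (T : finType) (e : rel T) :
  simple_graph e -> connected_graph e -> isolate_free e ->
  dom_wins e (init_coloring T) false.
Proof.
move=> [e_sym e_irr] e_conn e_isof; apply: balanced_dom_wins => // x c.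
by rewrite ffunE.
Qed.
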